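(* Let $(W,S)$ be an irreducible right-angled Coxeter system and let $w\in W$. Suppose $t_1,\dots,t_n\in S$ satisfy (1) $t_1\notin S(w)$, (2) $o(t_it_{i+1})=\infty$ for all $i\in\{1,\dots,n-1\}$, and (3) $\{t_1,\dots,t_n\}=S$. Then $w t_1t_2\cdots t_n\in W^{\{t_n\}}$.
   Context: A Coxeter system $(W,S)$: $S$ finite, $W=\langle S\mid (st)^{m(s,t)}=1\rangle$ with $m(s,s)=1$, $m(s,t)=m(t,s)\ge2$ for $s\ne t$. Right-angled: $m(s,t)\in\{2,\infty\}$ for $s\ne t$. Irreducible: for no nonempty proper $T\subset S$ is $W=W_T\times W_{S\setminus T}$. $o(st)$ is the order of $st$; $\ell$ is word length with respect to $S$; $S(w)=\{s\in S\mid\ell(ws)<\ell(w)\}$; $W^T=\{w\in W\mid S(w)=T\}$. *)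

From mathcomp Require Import all_boot.
Set Implicit Arguments.
Unset Strict Implicit.
Unset Printing Implicit Defensive.

Section Coxeter.
Variable S : finType.
(* Coxeter matrix: m s t : nat, where 0 encodes m(s,t) = infinity. *)
Variable m : S -> S -> nat.

Definition coxeter_matrix : Prop :=
  (forall s, m s s = 1) /\ (forall s t, m s t = m t s) /\
  (forall s t, s != t -> m s t = 0 \/ 2 <= m s t).

Definition right_angled : Prop :=
  forall s t, s != t -> m s t = 2 \/ m s t = 0.

Definition alt_word (s t : S) (k : nat) : seq S := flatten (nseq k [:: s; t]).

(* Equality in W = < S | (st)^{m(s,t)} = 1 >: the congruence on words
   generated by the defining relations. *)
Inductive eqW : seq S -> seq S -> Prop :=
| eqW_refl u : eqW u u
| eqW_sym u v : eqW u v -> eqW v u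
| eqW_trans u v w : eqW u v -> eqW v w -> eqW u w
| eqW_rel (p q : seq S) (s t : S) :
    m s t != 0 -> eqW (p ++ alt_word s t (m s t) ++ q) (p ++ q).

(* ell(u) < ell(v) in W *)
Definition length_lt (u v : seq S) : Prop :=
  exists u', eqW u u' /\ forall v', eqW v v' -> size u' < size v'.

Definition descent (w : seq S) (s : S) : Prop := length_lt (rcons w s) w.

(* w \in W^T, i.e. S(w) = T *)
Definition in_WT (T : {set S}) (w : seq S) : Prop :=
  forall s, descent w s <-> s \in T.

Definition order_inf (s t : S) : Prop :=
  forall k, 0 < k -> ~ eqW (alt_word s t k) [::].

Definition in_parabolic (T : {set S}) (u : seq S) : Prop :=
  exists v, eqW u v /\ all (fun x => x \in T) v.

Definition direct_product (T U : {set S}) : Prop :=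
  [/\ (forall a b, in_parabolic T a -> in_parabolic U b -> eqW (a ++ b) (b ++ a)),
      (forall a, in_parabolic T a -> in_parabolic U a -> eqW a [::]) &
      (forall w, exists a b, [/\ in_parabolic T a, in_parabolic U b & eqW w (a ++ b)])].

Definition irreducible : Prop :=
  forall T : {set S}, T != set0 -> T != setT -> ~ direct_product T (~: T).

End Coxeter.

From mathcomp Require Import all_boot.
Set Implicit Arguments.
Unset Strict Implicit.
Unset Printing Implicit Defensive.

(* In a right-angled Coxeter group a word is determined, modulo the defining
   relations, by its restrictions to all pairs {a, b} of generators that do not
   commute (a = b allowed).  Reading a word from left to right and cancelling
   each new letter s against its last occurrence whenever no letter failing to
   commute with s stands after it yields a reduced word that only depends on
   the group element; its size is the length, and the descents of w are the
   letters cancellable at the end of this normal form.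

   Since t1 is not cancellable against the normal form of w and t(i+1) is
   blocked by t(i), the normal form of w t1 ... tn is nf(w) t1 ... tn.  In it
   every t(i) with i < n is followed, after its last occurrence, by t(i+1),
   which does not commute with it; so only tn is cancellable, and by (3) every
   generator is some t(i). *)

Section RightAngledNormalForm.
Variable S : finType.
Variable m : S -> S -> nat.
Hypothesis m_sym : forall s t, m s t = m t s.
Hypothesis m_diag : forall s, m s s = 1.
Hypothesis m_ra : right_angled m.

Definition noncomm a b := m a b != 2.

Lemma noncommC a b : noncomm a b = noncomm b a.
Proof. by rewrite /noncomm m_sym. Qed.

Lemma noncommxx a : noncomm a a.
Proof. by rewrite /noncomm m_diag. Qed.

Definition restr a b (v : seq S) := filter (fun x => (x == a) || (x == b)) v.

Lemma restr_cat a b u v : restr a b (u ++ v) = restr a b u ++ restr a b v.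
Proof. exact: filter_cat. Qed.

Lemma restr_cons a b x v : restr a b (x :: v) =
  if (x == a) || (x == b) then x :: restr a b v else restr a b v.
Proof. by []. Qed.

Lemma restr_rcons a b x v : restr a b (rcons v x) =
  if (x == a) || (x == b) then rcons (restr a b v) x else restr a b v.
Proof. exact: filter_rcons. Qed.

Definition restr_eq v v' := forall a b, noncomm a b -> restr a b v = restr a b v'.

Lemma restr_eq_sym v v' : restr_eq v v' -> restr_eq v' v.
Proof. by move=> E a b h; rewrite E. Qed.

Lemma restr_eq_trans v1 v2 v3 : restr_eq v1 v2 -> restr_eq v2 v3 -> restr_eq v1 v3.
Proof. by move=> E1 E2 a b h; rewrite E1 // E2. Qed.

Lemma restr_eq_size v v' : restr_eq v v' -> size v = size v'.
Proof.
move=> E; apply: perm_size; apply/allP => x _ /=.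
have count_restr u : count_mem x u = size (restr x x u).
  by rewrite size_filter; apply: eq_count => y; rewrite /= orbb.
by rewrite !count_restr (E x x (noncommxx x)).
Qed.

(* The last [s] of [v] commutes with everything after it, so it can be moved
   to the end and cancelled. *)
Definition cancellable (v : seq S) s := (restr s s v != [::]) &&
  [forall b, noncomm s b ==> (last s (restr s b v) == s)].

Definition rem_last s (v : seq S) := rev (rem s (rev v)).

Definition rmul v s := if cancellable v s then rem_last s v else rcons v s.

Lemma cancellable_restr t v v' :
    (forall b, noncomm t b -> restr t b v = restr t b v') ->
  cancellable v t = cancellable v' t.
Proof.
move=> E; rewrite /cancellable (E t (noncommxx t)); congr (_ && _).
by apply: eq_forallb => b; case: (boolP (noncomm t b)) => // h; rewrite E.
Qed.

Lemma split_last_occ (s : S) v :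
  s \in v -> exists a c, v = a ++ s :: c /\ s \notin c.
Proof.
elim/last_ind: v => [|v x IH] //.
rewrite -cats1 mem_cat mem_seq1; case: (eqVneq s x) => [-> _ | nxs].
  by exists v, [::].
rewrite orbF => /IH [a [c [-> nc]]]; exists a, (rcons c x).
by rewrite -catA /= cats1 mem_rcons in_cons negb_or nxs.
Qed.

Lemma last_notin (s : S) (l c : seq S) :
  l != [::] -> {subset l <= c} -> s \notin c -> last s l != s.
Proof.
case: l => // z l _ sub nc /=; apply/eqP => e.
by have := mem_last z l; rewrite e => /sub; rewrite (negbTE nc).
Qed.

Lemma rem_cat_notin (s : S) l1 l2 : s \notin l1 -> rem s (l1 ++ s :: l2) = l1 ++ l2.
Proof.
elim: l1 => [|x l1 IH] /=; first by rewrite eqxx.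
by rewrite in_cons negb_or => /andP [h1 h2]; rewrite eq_sym (negbTE h1) IH.
Qed.

Lemma cancellableP v s : cancellable v s -> exists a c,
  [/\ v = a ++ s :: c, s \notin c, all (fun y => ~~ noncomm s y) c
    & rmul v s = a ++ c].
Proof.
move=> hc; case/andP: (hc) => hn /forallP hf.
have : s \in v.
  by move: hn; rewrite /restr -has_filter => /hasP [x xv]; rewrite orbb => /eqP <-.
case/split_last_occ => a [c [Ev nc]].
have c_commute : all (fun y => ~~ noncomm s y) c.
  apply/allP => y yc; apply/negP => dsy.
  have := hf y; rewrite dsy /= Ev restr_cat restr_cons eqxx /= last_cat /=.
  apply/negP; apply: last_notin nc; last first.
    by move=> z; rewrite mem_filter => /andP [].
  apply/eqP => e; have : y \in restr s y c by rewrite mem_filter eqxx orbT yc.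
  by rewrite e.
exists a, c; split => //.
rewrite /rmul hc Ev /rem_last rev_cat rev_cons -cats1 -catA /= rem_cat_notin.
  by rewrite rev_cat !revK.
by rewrite mem_rev.
Qed.

Lemma restr_commuting a b s c : noncomm a b -> (s == a) || (s == b) ->
  all (fun y => ~~ noncomm s y) c -> restr a b c = [::].
Proof.
move=> dab hs; elim: c => [|y c IH] //= /andP [hy hc].
rewrite IH //; case: ifP => // /orP [] /eqP ey; subst y; move: hy;
  case/orP: hs => /eqP ->; rewrite ?noncommxx //= ?dab // noncommC dab //.
Qed.

Lemma restr_letter_commuting a b s t : noncomm a b -> ~~ noncomm s t ->
  (s == a) || (s == b) -> ~~ ((t == a) || (t == b)).
Proof.
move=> dab nd /orP [] /eqP es; apply/negP => /orP [] /eqP et;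
  by move: nd; rewrite es et ?noncommxx ?dab //= noncommC dab.
Qed.

Definition restr_step a b s (cancel : bool) (l : seq S) :=
  if (s == a) || (s == b) then
    (if cancel then take (size l).-1 l else rcons l s)
  else l.

Lemma restr_step_id a b s c l :
  ~~ ((s == a) || (s == b)) -> restr_step a b s c l = l.
Proof. by rewrite /restr_step => /negbTE ->. Qed.

Lemma restr_rmul a b v s : noncomm a b ->
  restr a b (rmul v s) = restr_step a b s (cancellable v s) (restr a b v).
Proof.
move=> dab; rewrite /restr_step; case: (boolP (cancellable v s)) => hc.
  have [a' [c [Ev _ c_commute ->]]] := cancellableP hc.
  rewrite Ev !restr_cat restr_cons; case: ifP => hs; rewrite ?hs //.
  by rewrite (restr_commuting dab hs c_commute) cats0 take_size_cat // size_cat /= addn1.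
by rewrite /rmul (negbTE hc) restr_rcons.
Qed.

Lemma rmul_restr_eq v v' s : restr_eq v v' -> restr_eq (rmul v s) (rmul v' s).
Proof.
move=> E a b dab; rewrite !restr_rmul // (E a b dab).
by rewrite (@cancellable_restr s v v') // => b' /E.
Qed.

Lemma rmulC v s t : ~~ noncomm s t ->
  restr_eq (rmul (rmul v s) t) (rmul (rmul v t) s).
Proof.
move=> nd a b dab; rewrite !restr_rmul //.
have nd' : ~~ noncomm t s by rewrite noncommC.
have -> : cancellable (rmul v s) t = cancellable v t.
  apply: cancellable_restr => b' dtb; rewrite restr_rmul // restr_step_id //.
  by apply: (restr_letter_commuting dtb nd'); rewrite eqxx.
have -> : cancellable (rmul v t) s = cancellable v s.
  apply: cancellable_restr => b' dtb; rewrite restr_rmul // restr_step_id //.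
  by apply: (restr_letter_commuting dtb nd); rewrite eqxx.
case: (boolP ((s == a) || (s == b))) => hs.
  by have ht := restr_letter_commuting dab nd hs; rewrite !(restr_step_id _ _ ht).
by rewrite !(restr_step_id _ _ hs).
Qed.

(* Recursion on the reversed word, so that [reduced (rcons v x)] unfolds. *)
Fixpoint reduced_rev (r : seq S) : bool :=
  if r is x :: r' then ~~ cancellable (rev r') x && reduced_rev r' else true.

Definition reduced v := reduced_rev (rev v).

Lemma reduced_rcons v x : reduced (rcons v x) = ~~ cancellable v x && reduced v.
Proof. by rewrite /reduced rev_rcons /= revK. Qed.

Lemma reduced_catl v w : reduced (v ++ w) -> reduced v.
Proof.
elim/last_ind: w => [|w x IH]; first by rewrite cats0.
by rewrite -rcons_cat reduced_rcons => /andP [_ /IH].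
Qed.

Lemma cancellable_insert_commuting x a s c : ~~ noncomm x s ->
  cancellable (a ++ s :: c) x = cancellable (a ++ c) x.
Proof.
move=> nd; apply: cancellable_restr => b dxb; rewrite !restr_cat restr_cons.
have -> // : (s == x) || (s == b) = false.
apply/negbTE/negP => /orP [] /eqP e; move: nd; rewrite e ?noncommxx //.
by rewrite dxb.
Qed.

Lemma cancellable_cat_commuting x a c : all (fun y => ~~ noncomm x y) c ->
  cancellable (a ++ c) x = cancellable a x.
Proof.
elim: c => [|y c IH]; first by rewrite cats0.
by rewrite /= => /andP [hy hc]; rewrite cancellable_insert_commuting // IH.
Qed.

Lemma reduced_remove_commuting a s c : reduced (a ++ s :: c) ->
  all (fun y => ~~ noncomm s y) c -> reduced (a ++ c).
Proof.
elim/last_ind: c => [|c x IH].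
  by rewrite cats0 cats1 reduced_rcons => /andP [].
rewrite all_rcons => H /andP [hx hc]; move: H.
rewrite -rcons_cons -rcons_cat reduced_rcons => /andP [nc H].
rewrite -rcons_cat reduced_rcons IH // andbT.
by rewrite -(@cancellable_insert_commuting x a s c) // noncommC.
Qed.

Lemma reduced_rmul v s : reduced v -> reduced (rmul v s).
Proof.
move=> Rv; case: (boolP (cancellable v s)) => hc.
  have [a [c [Ev _ c_commute ->]]] := cancellableP hc.
  by apply: reduced_remove_commuting c_commute; rewrite -Ev.
by rewrite /rmul (negbTE hc) reduced_rcons hc Rv.
Qed.

Lemma cancellable_rcons v s : cancellable (rcons v s) s.
Proof.
apply/andP; split; first by rewrite restr_rcons eqxx /=; case: (restr s s v).
by apply/forallP => b; apply/implyP => _; rewrite restr_rcons eqxx /= last_rcons.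
Qed.

Lemma rmul_rcons v s : rmul (rcons v s) s = v.
Proof. by rewrite /rmul cancellable_rcons /rem_last rev_rcons /= eqxx revK. Qed.

(* On a reduced word, [rmul _ s] is an involution up to [restr_eq]; this
   fails for arbitrary words, which is why [reduced] is needed. *)
Lemma rmulK v s : reduced v -> restr_eq (rmul (rmul v s) s) v.
Proof.
move=> Rv; case: (boolP (cancellable v s)) => hc; last first.
  by rewrite /rmul (negbTE hc) -/(rmul _ s) rmul_rcons.
have [a [c [Ev nc c_commute Hv]]] := cancellableP hc; rewrite Hv.
have hc' : ~~ cancellable (a ++ c) s.
  rewrite cancellable_cat_commuting //.
  move: Rv; rewrite Ev -cat_rcons => /reduced_catl.
  by rewrite reduced_rcons => /andP [].
rewrite /rmul (negbTE hc') Ev => p q dpq.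
rewrite restr_rcons !restr_cat restr_cons; case: ifP => hs //.
by rewrite (restr_commuting dpq hs c_commute) cats0 cats1.
Qed.

Definition nf u := foldl rmul [::] u.

Lemma reduced_foldl v u : reduced v -> reduced (foldl rmul v u).
Proof. by elim: u v => //= x u IH v Rv; apply/IH/reduced_rmul. Qed.

Lemma restr_eq_foldl v v' u : restr_eq v v' ->
  restr_eq (foldl rmul v u) (foldl rmul v' u).
Proof. by elim: u v v' => //= x u IH v v' E; apply/IH/rmul_restr_eq. Qed.

Lemma restr_eq_foldl_rel v s t : reduced v -> m s t != 0 ->
  restr_eq (foldl rmul v (alt_word s t (m s t))) v.
Proof.
move=> Rv hm; case: (eqVneq s t) => [<-|nst]; first by rewrite m_diag; apply: rmulK.
have m2 : m s t = 2 by case: (m_ra nst) => // e; rewrite e in hm.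
have nd : ~~ noncomm s t by rewrite /noncomm m2 negbK.
rewrite m2 /=; set v1 := rmul v s.
apply: (@restr_eq_trans _ (rmul (rmul (rmul v1 s) t) t)).
  by apply/rmul_restr_eq/rmulC; rewrite noncommC.
apply: (@restr_eq_trans _ (rmul (rmul v t) t)); last exact: rmulK.
by do 2 apply: rmul_restr_eq; apply: rmulK.
Qed.

Lemma eqW_nf u v : eqW m u v -> restr_eq (nf u) (nf v).
Proof.
elim => {u v} [u|u v _ IH|u v w _ IH1 _ IH2|p q s t hm].
- by [].
- exact: restr_eq_sym.
- exact: restr_eq_trans IH1 IH2.
rewrite /nf !foldl_cat; apply/restr_eq_foldl/restr_eq_foldl_rel => //.
exact: reduced_foldl.
Qed.

Lemma eqW_cat2 p q u v : eqW m u v -> eqW m (p ++ u ++ q) (p ++ v ++ q).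
Proof.
elim => {u v} [u|u v _ IH|u v w _ IH1 _ IH2|p0 q0 s t hm].
- exact: eqW_refl.
- exact: eqW_sym.
- exact: eqW_trans IH1 IH2.
by have := eqW_rel (p ++ p0) (q0 ++ q) hm; rewrite -!catA.
Qed.

Lemma eqW_catl p u v : eqW m u v -> eqW m (p ++ u) (p ++ v).
Proof. by move=> h; have := eqW_cat2 p [::] h; rewrite !cats0. Qed.

Lemma eqW_square p q s : eqW m (p ++ [:: s; s] ++ q) (p ++ q).
Proof. by have := @eqW_rel S m p q s s; rewrite m_diag; apply. Qed.

Lemma eqW_commute s y : m s y = 2 -> eqW m [:: s; y] [:: y; s].
Proof.
move=> h; have h' : m y s = 2 by rewrite m_sym.
have e1 : eqW m [:: y; s; y; s; s; y] [:: s; y].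
  by have := @eqW_rel S m [::] [:: s; y] y s; rewrite h'; apply.
have e2 := eqW_square [:: y; s; y] [:: y] s.
have e3 := eqW_square [:: y; s] [::] y.
exact: eqW_trans (eqW_sym e1) (eqW_trans e2 e3).
Qed.

Lemma eqW_conj_commuting s c :
  all (fun y => ~~ noncomm s y) c -> eqW m (s :: c ++ [:: s]) c.
Proof.
elim: c => [|y c IH] /=; first by move=> _; exact: (eqW_square [::] [::] s).
case/andP => hy hc.
have hy2 : m s y = 2 by move: hy; rewrite /noncomm negbK => /eqP.
apply: eqW_trans (eqW_cat2 [::] (c ++ [:: s]) (eqW_commute hy2)) _.
exact: (eqW_catl [:: y] (IH hc)).
Qed.

Lemma rmul_eqW v s : eqW m (rmul v s) (rcons v s).
Proof.
case: (boolP (cancellable v s)) => hc; last by rewrite /rmul (negbTE hc); apply: eqW_refl.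
have [a [c [Ev _ c_commute ->]]] := cancellableP hc.
by rewrite Ev -cats1 -catA; apply/eqW_sym/eqW_catl/eqW_conj_commuting.
Qed.

Lemma nf_rcons u x : nf (rcons u x) = rmul (nf u) x.
Proof. by rewrite /nf foldl_rcons. Qed.

Lemma nf_eqW u : eqW m (nf u) u.
Proof.
elim/last_ind: u => [|u x IH]; first exact: eqW_refl.
rewrite nf_rcons; apply: eqW_trans (rmul_eqW _ _) _.
by rewrite -!cats1; exact: (eqW_cat2 [::] [:: x] IH).
Qed.

Lemma size_rmul v s :
  size (rmul v s) = if cancellable v s then (size v).-1 else (size v).+1.
Proof.
case: (boolP (cancellable v s)) => hc.
  by have [a [c [-> _ _ ->]]] := cancellableP hc; rewrite !size_cat /= addnS.
by rewrite /rmul (negbTE hc) size_rcons.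
Qed.

Lemma size_nf u : size (nf u) <= size u.
Proof.
elim/last_ind: u => // u x IH; rewrite nf_rcons size_rmul size_rcons.
by case: ifP => _; [apply: leq_trans (leq_pred _) (leqW IH) | rewrite ltnS].
Qed.

Lemma size_nf_eqW u v : eqW m u v -> size (nf u) = size (nf v).
Proof. by move/eqW_nf/restr_eq_size. Qed.

Lemma length_ltE u v : length_lt m u v <-> size (nf u) < size (nf v).
Proof.
split.
  case=> u' [hu hv]; rewrite (size_nf_eqW hu).
  by apply: leq_ltn_trans (size_nf u') _; apply/hv/eqW_sym/nf_eqW.
move=> h; exists (nf u); split; first exact/eqW_sym/nf_eqW.
by move=> v' hv; apply: leq_trans h _; rewrite (size_nf_eqW hv) size_nf.
Qed.

Lemma descentE w s : descent m w s <-> cancellable (nf w) s.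
Proof.
apply: iff_trans (length_ltE _ _) _; rewrite nf_rcons size_rmul.
case: ifP => hc; first by split => // _; move: hc; case: (nf w).
by rewrite ltnNge leqnSn.
Qed.

Definition free_pair a b := (a != b) && noncomm a b.

Lemma order_inf_free_pair a b : order_inf m a b -> free_pair a b.
Proof.
move=> h; have m0 : m a b = 0.
  apply/eqP/negPn/negP => hm; apply: (h (m a b)); first by rewrite lt0n.
  by have := eqW_rel [::] [::] hm; rewrite /= cats0.
rewrite /free_pair /noncomm m0 andbT; apply/eqP => e; subst.
by rewrite m_diag in m0.
Qed.

Lemma cancellable_blocked v y q s : noncomm s y -> y != s -> s \notin y :: q ->
  ~~ cancellable (v ++ y :: q) s.
Proof.
move=> dsy ys ns; apply/negP => /andP [_ /forallP /(_ y)].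
rewrite dsy /= restr_cat restr_cons eqxx orbT last_cat /=.
have sub : {subset y :: restr s y q <= y :: q}.
  by move=> z; rewrite !in_cons mem_filter => /orP [->|/andP [_ ->]]; rewrite ?orbT.
by have := @last_notin s (y :: restr s y q) (y :: q) isT sub ns; move/negbTE => ->.
Qed.

Lemma foldl_rmul_chain ts v t1 : ~~ cancellable v t1 -> path free_pair t1 ts ->
  foldl rmul v (t1 :: ts) = v ++ t1 :: ts.
Proof.
elim: ts v t1 => [|t2 ts IH] v t1 hc.
  by move=> _; rewrite cats1 /= /rmul (negbTE hc).
case/andP => /andP [n12 d12] hp.
have -> : foldl rmul v [:: t1, t2 & ts] = foldl rmul (rcons v t1) (t2 :: ts).
  by rewrite /= /rmul (negbTE hc).
rewrite (IH _ t2) ?cat_rcons //.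
by rewrite -cats1 cancellable_blocked // 1?noncommC // mem_seq1 eq_sym.
Qed.

Lemma cancellable_chain ts v t1 s : path free_pair t1 ts -> s \in t1 :: ts ->
  cancellable (v ++ t1 :: ts) s = (s == last t1 ts).
Proof.
elim: ts v t1 s => [|t2 ts IH] v t1 s.
  by move=> _; rewrite mem_seq1 => /eqP ->; rewrite cats1 cancellable_rcons eqxx.
case/andP => /andP [n12 d12] hp; rewrite in_cons => /orP [/eqP -> | hs]; last first.
  by rewrite -cat_rcons IH.
case: (boolP (t1 \in t2 :: ts)) => h1; first by rewrite -cat_rcons IH.
rewrite -cat_rcons (negbTE (cancellable_blocked _ d12 _ h1)) 1?eq_sym //.
by apply/esym/negbTE/negP => /= /eqP e; move: h1; rewrite -e mem_last.
Qed.

End RightAngledNormalForm.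

Theorem lemma8p4 (S : finType) (m : S -> S -> nat)
  (Hcox : coxeter_matrix m) (Hra : right_angled m) (Hirr : irreducible m)
  (w : seq S) (t1 : S) (ts : seq S)
  (H1 : ~ descent m w t1)
  (H2 : forall i, i.+1 < size (t1 :: ts) ->
          order_inf m (nth t1 (t1 :: ts) i) (nth t1 (t1 :: ts) i.+1))
  (H3 : forall s : S, s \in t1 :: ts) :
  in_WT m [set last t1 ts] (w ++ t1 :: ts).
Proof.
case: Hcox => m_diag [m_sym _].
have chain : path (free_pair m) t1 ts.
  by apply/(pathP t1) => i hi; apply/(order_inf_free_pair m_diag)/H2.
have t1_blocked : ~~ cancellable m (nf m w) t1.
  by apply/negP => /(descentE m_sym m_diag Hra).
move=> s; apply: iff_trans (descentE m_sym m_diag Hra _ _) _.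
rewrite /nf foldl_cat -/(nf m w) (foldl_rmul_chain m_sym t1_blocked chain).
by rewrite (cancellable_chain _ chain) // in_set1.
Qed.
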